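(* Let $\vec H$ be a DAG and let $u,v$ be two sources of $\vec H$ such that there is a vertex $w\in R(u)\cap R(v)$ with $w\notin R(s)$ for every source $s\notin\{u,v\}$. Then in every DAG elimination forest of $\vec H$, the nodes $u$ and $v$ lie on a common root-to-leaf path (i.e., one is an ancestor of the other).
   Context: For a DAG $\vec H$, a source is a vertex of in-degree $0$; $R(s)$ is the set of vertices reachable from $s$ by a directed path. A DAG elimination forest of a DAG $\vec H$ is defined recursively: if $\vec H$ is empty, it is the empty forest; if the underlying undirected graph of $\vec H$ is disconnected, it is the union of DAG elimination forests (trees) of its connected components; if the underlying graph is connected and $\vec H$ has exactly one source $s$, it is the single-node tree $s$; otherwise (connected, at least two sources) it is a tree whose root is an arbitrarily chosen source $s$ of $\vec H$ and whose subtrees are the trees of a DAG elimination forest of the DAG obtained from $\vec H$ by deleting $s$ and all vertices reachable from $s$. Its nodes are thus the sources of $\vec H$. *)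

From mathcomp Require Import all_boot.
Set Implicit Arguments. Unset Strict Implicit. Unset Printing Implicit Defensive.

(* A DAG H is given by a finite vertex type T and an edge relation e : rel T
   (edge x -> y iff e x y).  Sub-DAGs arising in the recursion are induced
   subgraphs on a vertex set V : {set T}. *)
Section DAG.
Variables (T : finType) (e : rel T).

Definition acyclic : Prop := forall x y, e x y -> ~~ connect e y x.

Definition eV (V : {set T}) : rel T :=
  [rel x y | [&& x \in V, y \in V & e x y]].

Definition reach (V : {set T}) (s : T) : {set T} :=
  [set y | connect (eV V) s y].

Definition sources (V : {set T}) : {set T} :=
  [set s in V | [forall x in V, ~~ e x s]].

Definition ueV (V : {set T}) : rel T := [rel x y | eV V x y || eV V y x].

Definition comp (V : {set T}) (x : T) : {set T} :=
  [set y in V | connect (ueV V) x y].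

Definition is_component (V C : {set T}) : Prop :=
  exists2 x, x \in V & C = comp V x.

End DAG.

Inductive tree (T : Type) : Type := Node : T -> list (tree T) -> tree T.
Arguments Node {T}.

Inductive elim_tree (T : finType) (e : rel T) : {set T} -> tree T -> Prop :=
  | ET_one V s :
      sources e V = [set s] -> elim_tree e V (Node s [::])
  | ET_many V s f :
      1 < #|sources e V| -> s \in sources e V ->
      elim_forest e (V :\: reach e V s) f -> elim_tree e V (Node s f)
with elim_forest (T : finType) (e : rel T) : {set T} -> list (tree T) -> Prop :=
  | EF_nil V : V = set0 -> elim_forest e V [::]
  | EF_cons V C t f :
      is_component e V C -> elim_tree e C t ->
      elim_forest e (V :\: C) f -> elim_forest e V (t :: f).

Inductive occ_tree (T : Type) (x : T) : tree T -> Prop :=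
  | OT_root f : occ_tree x (Node x f)
  | OT_sub y f : occ_forest x f -> occ_tree x (Node y f)
with occ_forest (T : Type) (x : T) : list (tree T) -> Prop :=
  | OF_here t f : occ_tree x t -> occ_forest x (t :: f)
  | OF_there t f : occ_forest x f -> occ_forest x (t :: f).

Inductive anc_tree (T : Type) (u v : T) : tree T -> Prop :=
  | AT_root f : occ_forest v f -> anc_tree u v (Node u f)
  | AT_sub y f : anc_forest u v f -> anc_tree u v (Node y f)
with anc_forest (T : Type) (u v : T) : list (tree T) -> Prop :=
  | AF_here t f : anc_tree u v t -> anc_forest u v (t :: f)
  | AF_there t f : anc_forest u v f -> anc_forest u v (t :: f).

From Pilot Require Import Defs.
From mathcomp Require Import all_boot.
Set Implicit Arguments. Unset Strict Implicit.

(* Every vertex set met in the recursion is closed under predecessors, so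
   while it contains w it also contains u and v, which are then sources of
   it; in particular it has at least two sources. Follow the component
   containing w: a root s other than u and v cannot reach w, so w survives
   the deletion of R(s). Hence the recursion eventually picks u (or v) as a
   root while w, and so v (or u), is still present; v is then a source of
   the remaining sub-DAG and therefore a node of the subforest below u. *)

Scheme elim_tree_mut := Induction for elim_tree Sort Prop
  with elim_forest_mut := Induction for elim_forest Sort Prop.
Combined Scheme elim_mutind from elim_tree_mut, elim_forest_mut.

Section Sources.
Variables (T : finType) (e : rel T).

Definition backward_closed (V : {set T}) := forall x y, e x y -> y \in V -> x \in V.

Lemma sourcesS (V W : {set T}) x :
  x \in sources e V -> W \subset V -> x \in W -> x \in sources e W.
Proof.
move=> + /subsetP sWV xW; rewrite !inE xW => /andP[_ /forallP noin].
by apply/forallP => y; apply/implyP => yW; have := noin y; rewrite sWV.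
Qed.

Lemma source_notin_reach V s x :
  x \in sources e V -> x != s -> x \notin reach e V s.
Proof.
rewrite !inE => /andP[_ /forallP noin] xs; apply/negP => /connectP[p].
case/lastP: p => [_ /eqP|p z]; first by rewrite (negPf xs).
rewrite rcons_path last_rcons => /andP[_ /and3P[yV _ eyz]] Ez; subst z.
by have := noin (last s p); rewrite yV eyz.
Qed.

Lemma sources_diff_reach V s x :
  x \in sources e V -> x != s -> x \in sources e (V :\: reach e V s).
Proof.
move=> xsrc xs; apply: (sourcesS xsrc (subsetDl _ _)).
by rewrite inE source_notin_reach //; case/setIdP: xsrc.
Qed.

Lemma sources_diff_comp V (C : {set T}) x :
  x \in sources e V -> x \notin C -> x \in sources e (V :\: C).
Proof.
move=> xsrc xC; apply: (sourcesS xsrc (subsetDl _ _)).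
by rewrite inE xC; case/setIdP: xsrc.
Qed.

Lemma sources_comp V C x :
  is_component e V C -> x \in C -> x \in sources e V -> x \in sources e C.
Proof.
case=> x0 _ -> xC xsrc; apply: (sourcesS xsrc _ xC).
by apply/subsetP => y /setIdP[].
Qed.

Lemma sources_occ :
  (forall V t, elim_tree e V t -> forall x, x \in sources e V -> occ_tree x t) /\
  (forall V f, elim_forest e V f -> forall x, x \in sources e V -> occ_forest x f).
Proof.
apply: (elim_mutind
  (P := fun V t _ => forall x, x \in sources e V -> occ_tree x t)
  (P0 := fun V f _ => forall x, x \in sources e V -> occ_forest x f)).
- by move=> V s -> x /set1P ->; constructor.
- move=> V s f _ _ _ IHf x xsrc; have [->|xs] := eqVneq x s; first by constructor.
  by apply/OT_sub/IHf/sources_diff_reach.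
- by move=> V -> x /setIdP[]; rewrite inE.
- move=> V C t f HC _ IHt _ IHf x xsrc; case xC: (x \in C).
  + exact/OF_here/IHt/(sources_comp HC).
  + by apply/OF_there/IHf/sources_diff_comp; rewrite ?xC.
Qed.

Lemma root_anc_sources V s x f :
  elim_forest e (V :\: reach e V s) f -> x \in sources e V -> x != s ->
  anc_tree s x (Node s f).
Proof.
by move=> Hf xsrc xs; apply/AT_root/(proj2 sources_occ _ _ Hf)/sources_diff_reach.
Qed.

Lemma backward_closed_connect V x y :
  backward_closed V -> connect (eV e setT) x y -> y \in V -> x \in V.
Proof.
move=> clV /connectP[p + ->]; elim: p x => [|z p IH] x //= /andP[/and3P[_ _ exz]].
by move=> /IH zV /zV; apply: clV.
Qed.

Lemma backward_closed_comp V x0 :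
  backward_closed V -> backward_closed (Defs.comp e V x0).
Proof.
move=> clV x y exy /setIdP[yV x0y]; have xV := clV _ _ exy yV.
rewrite inE xV (connect_trans x0y) // connect1 //.
by rewrite /ueV /eV /= xV yV exy orbT.
Qed.

Lemma backward_closed_diff_reach V s :
  backward_closed V -> backward_closed (V :\: reach e V s).
Proof.
move=> clV x y exy /setDP[yV yR]; have xV := clV _ _ exy yV.
rewrite inE xV andbT; apply: contra yR; rewrite !inE => sx.
by rewrite (connect_trans sx) // connect1 // /eV /= xV yV.
Qed.

Lemma backward_closed_diff_comp V C :
  backward_closed V -> is_component e V C -> backward_closed (V :\: C).
Proof.
move=> clV [x0 _ ->] x y exy /setDP[yV yC]; have xV := clV _ _ exy yV.
rewrite inE xV andbT; apply: contra yC; rewrite !inE yV => /andP[_ x0x].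
by rewrite (connect_trans x0x) // connect1 // /ueV /eV /= xV yV exy.
Qed.

Lemma backward_closed_sources V x :
  backward_closed V -> x \in sources e V -> x \in sources e setT.
Proof.
move=> clV /setIdP[xV /forallP noin]; rewrite inE inE /=.
apply/forallP => y; apply/implyP => _; apply/negP => eyx.
by have := noin y; rewrite (clV _ _ eyx xV) eyx.
Qed.

Lemma reach_subT V s : reach e V s \subset reach e setT s.
Proof.
apply/subsetP => y; rewrite !inE; apply: connect_sub => a b /and3P[_ _ eab].
by rewrite connect1 // /eV /= !inE.
Qed.

End Sources.

Section CommonPath.
Variables (T : finType) (e : rel T) (u v w : T).
Hypotheses (usrc : u \in sources e setT) (vsrc : v \in sources e setT)
  (uv : u != v) (wu : w \in reach e setT u) (wv : w \in reach e setT v)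
  (w_only_uv : forall s, s \in sources e setT -> s != u -> s != v ->
                 w \notin reach e setT s).

Definition keeps_w (V : {set T}) := backward_closed e V /\ w \in V.

Lemma keeps_w_sources V :
  keeps_w V -> u \in sources e V /\ v \in sources e V.
Proof.
case=> clV wV; split; [apply: (sourcesS usrc) | apply: (sourcesS vsrc)] => //.
- by apply: backward_closed_connect clV _ wV; move: wu; rewrite inE.
- by apply: backward_closed_connect clV _ wV; move: wv; rewrite inE.
Qed.

Lemma keeps_w_diff_reach V s :
  keeps_w V -> s \in sources e V -> s != u -> s != v ->
  keeps_w (V :\: reach e V s).
Proof.
case=> clV wV ssrc su sv; split; first exact: backward_closed_diff_reach.
rewrite inE wV andbT; apply: contra (w_only_uv _ su sv).
  exact/subsetP/reach_subT.
exact: backward_closed_sources ssrc.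
Qed.

Lemma common_path :
  (forall V t, elim_tree e V t -> keeps_w V ->
     anc_tree u v t \/ anc_tree v u t) /\
  (forall V f, elim_forest e V f -> keeps_w V ->
     anc_forest u v f \/ anc_forest v u f).
Proof.
apply: (elim_mutind
  (P := fun V t _ => keeps_w V -> anc_tree u v t \/ anc_tree v u t)
  (P0 := fun V f _ => keeps_w V -> anc_forest u v f \/ anc_forest v u f)).
- move=> V s Hs /keeps_w_sources[]; rewrite Hs => /set1P us /set1P vs.
  by move: uv; rewrite us vs eqxx.
- move=> V s f _ ssrc Hf IHf kV.
  have [uV vV] := keeps_w_sources kV.
  have [su|nsu] := eqVneq s u.
    by left; rewrite -su; apply: (root_anc_sources Hf vV); rewrite su eq_sym.
  have [sv|nsv] := eqVneq s v.
    by right; rewrite -sv; apply: (root_anc_sources Hf uV); rewrite sv.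
  by case: (IHf (keeps_w_diff_reach kV ssrc nsu nsv)) => H; [left|right];
    apply: AT_sub.
- by move=> V -> [_]; rewrite inE.
- move=> V C t f HC _ IHt _ IHf [clV wV]; case wC: (w \in C).
  + have clC : backward_closed e C by case: HC => x0 _ ->; exact: backward_closed_comp.
    by case: (IHt (conj clC wC)) => H; [left|right]; apply: AF_here.
  + have kVC : keeps_w (V :\: C).
      by split; [exact: backward_closed_diff_comp | rewrite inE wC].
    by case: (IHf kVC) => H; [left|right]; apply: AF_there.
Qed.

End CommonPath.

Theorem mainTheorem5 (T : finType) (e : rel T) (u v : T) :
  acyclic e ->
  u \in sources e setT -> v \in sources e setT -> u != v ->
  (exists w : T,
      [/\ w \in reach e setT u, w \in reach e setT v &
          forall s, s \in sources e setT -> s != u -> s != v ->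
                    w \notin reach e setT s]) ->
  forall F : list (tree T), elim_forest e setT F ->
    anc_forest u v F \/ anc_forest v u F.
Proof.
move=> _ usrc vsrc uv [w [wu wv w_only_uv]] F HF.
apply: (proj2 (common_path usrc vsrc uv wu wv w_only_uv)) HF _.
by split; [move=> x y _ _; rewrite inE | rewrite inE].
Qed.
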